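(* Let $N\ge1$ and consider pairs $(b,c)\in\mathbb{Z}_{\ge0}^2$ with $b+c\le 2N$. Call $(b',c')\in\mathbb{Z}_{\ge0}^2$ with $b'+c'\le2N$ a neighbor of $(b,c)$, $(b',c')\ne(b,c)$, if either $(b-b')(c-c')\ge0$ and $|b-b'|+|c-c'|\le2$, or $(b-b')(c-c')<0$ and $\max\{|b-b'|,|c-c'|\}\le2$. Define $\chi^2_{TDT}(b,c)=\frac{(b-c)^2}{b+c}$ for $b+c>0$ and $\chi^2_{TDT}(0,0)=0$, and $LS((b,c))=\max_{(b',c')\text{ neighbor of }(b,c)}|\chi^2_{TDT}(b,c)-\chi^2_{TDT}(b',c')|$. Then $LS((b,c))>6$ whenever $$0\le c<\tfrac{b-8}{7}\ \ \lor\ \ 2\le b<\tfrac{c+8}{7}\ \ \lor\ \ 0\le b<\tfrac{c-8}{7}\ \ \lor\ \ 2\le c<\tfrac{b+8}{7}.$$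
   Context: Here $b$ and $c$ are the off-diagonal counts of the $2\times2$ transmission-disequilibrium-test table classifying $2N$ parents of $N$ families (transmitted allele $A_1$/non-transmitted $A_2$ count $b$, transmitted $A_2$/non-transmitted $A_1$ count $c$); neighboring datasets differ in one family, which corresponds to the neighbor relation on $(b,c)$ given in the claim. *)

From HB Require Import structures.
From mathcomp Require Import all_boot all_order all_algebra.
Set Implicit Arguments. Unset Strict Implicit. Unset Printing Implicit Defensive.
Import Order.TTheory GRing.Theory Num.Theory.
Local Open Scope ring_scope.

Definition chi2 (R : realFieldType) (b c : nat) : R :=
  if (b + c == 0)%N then 0
  else ((b%:R - c%:R) ^+ 2) / (b + c)%:R.

(* (b',c') is a neighbor of (b,c) (the constraint b'+c' <= 2N is imposed
   separately in LS). *)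
Definition is_neighbor (b c b' c' : nat) : bool :=
  let db : int := b%:Z - b'%:Z in
  let dc : int := c%:Z - c'%:Z in
  ((b', c') != (b, c)) &&
  (if 0 <= db * dc then `|db| + `|dc| <= 2
   else Num.max `|db| `|dc| <= 2).

(* LS((b,c)) = max over neighbors (b',c') with b'+c' <= 2N of
   |chi2(b,c) - chi2(b',c')|.  Such b',c' lie in [0,2N], so ranging over
   'I_(2N+1) x 'I_(2N+1) covers all candidates. *)
Definition LS (R : realFieldType) (N b c : nat) : R :=
  \big[Num.max/0]_(p : 'I_(2 * N).+1 * 'I_(2 * N).+1
                   | ((p.1 + p.2 <= 2 * N)%N && is_neighbor b c p.1 p.2))
     `|chi2 R b c - chi2 R p.1 p.2|.

From HB Require Import structures.
From mathcomp Require Import all_boot all_order all_algebra zify ring lra.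
Import Order.TTheory GRing.Theory Num.Theory.
Local Open Scope ring_scope.

(* It suffices to look at the neighbour obtained by moving two parents from
   one off-diagonal cell to the other.  Since (u + 2)^2 - (u - 2)^2 = 8u,
   chi2(b, c) - chi2(b - 2, c + 2) = 8 (b - c - 2) / (b + c), which exceeds 6
   in absolute value under the stated linear conditions (and symmetrically
   with the roles of b and c exchanged). *)

Lemma chi2C (R : realFieldType) (b c : nat) : chi2 R b c = chi2 R c b.
Proof. by rewrite /chi2 addnC; congr (if _ then _ else _ / _); ring. Qed.

Lemma chi2_transfer (R : realFieldType) (x y : nat) :
  chi2 R (x + 2) y - chi2 R x (y + 2)
  = 8 * (x%:R - y%:R) / (x + y + 2)%:R.
Proof.
rewrite /chi2 (_ : (x + 2 + y == 0)%N = false); last by lia.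
rewrite (_ : (x + (y + 2) == 0)%N = false); last by lia.
rewrite (_ : (x + (y + 2))%N = (x + 2 + y)%N); last by lia.
rewrite (_ : (x + y + 2)%N = (x + 2 + y)%N); last by lia.
by rewrite -mulrBl !natrD; congr (_ / _); ring.
Qed.

Lemma is_neighbor_transfer (x y : nat) : is_neighbor (x + 2) y x (y + 2).
Proof.
rewrite /is_neighbor xpair_eqE (_ : (x == x + 2)%N = false); last by lia.
have -> : (x + 2)%N%:Z - x%:Z = 2 by rewrite PoszD; ring.
by have -> : y%:Z - (y + 2)%N%:Z = -2 by rewrite PoszD; ring.
Qed.

Lemma is_neighborC (b c b' c' : nat) :
  is_neighbor b c b' c' = is_neighbor c b c' b'.
Proof.
by rewrite /is_neighbor !xpair_eqE [(_ == c) && _]andbC mulrC [`|_| + _]addrC maxC.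
Qed.

Lemma LS_gt (R : realFieldType) (r : R) (N b c b' c' : nat) :
  (b' + c' <= 2 * N)%N -> is_neighbor b c b' c' ->
  r < `|chi2 R b c - chi2 R b' c'| -> r < LS R N b c.
Proof.
move=> hsum hnb hr.
have hb' : (b' < (2 * N).+1)%N by lia.
have hc' : (c' < (2 * N).+1)%N by lia.
rewrite /LS (bigD1 (Ordinal hb', Ordinal hc')) /=; last by rewrite hsum hnb.
by rewrite lt_max hr.
Qed.

Lemma chi2_transfer_gap (R : realFieldType) (x y : nat) :
  6 * (x + y + 2)%:R < 8 * `|x%:R - y%:R :> R| ->
  6 < `|chi2 R (x + 2) y - chi2 R x (y + 2)|.
Proof.
move=> h; rewrite chi2_transfer normrM normfV normrM !normr_nat.
by rewrite ltr_pdivlMr // ltr0n addn2.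
Qed.

Lemma LS_gt_transferl (R : realFieldType) (N b c : nat) :
  (b + c <= 2 * N)%N -> (2 <= b)%N ->
  6 * (b + c)%:R < 8 * `|b%:R - c%:R - 2 :> R| -> 6 < LS R N b c.
Proof.
move=> hsum /subnK bE; rewrite -{}bE in hsum *; set x := (b - 2)%N => h.
apply: (@LS_gt R 6 N _ _ x (c + 2)%N); first by lia.
  exact: is_neighbor_transfer.
apply: chi2_transfer_gap; rewrite addnAC.
by have <- : (x + 2)%:R - c%:R - 2 = x%:R - c%:R :> R by rewrite natrD; ring.
Qed.

Lemma LS_gt_transferr (R : realFieldType) (N b c : nat) :
  (b + c <= 2 * N)%N -> (2 <= c)%N ->
  6 * (b + c)%:R < 8 * `|c%:R - b%:R - 2 :> R| -> 6 < LS R N b c.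
Proof.
move=> hsum /subnK cE; rewrite -{}cE in hsum *; set y := (c - 2)%N => h.
apply: (@LS_gt R 6 N _ _ (b + 2)%N y); first by lia.
  by rewrite is_neighborC is_neighbor_transfer.
rewrite chi2C [chi2 R _ y]chi2C; apply: chi2_transfer_gap.
rewrite (_ : (y + b + 2)%N = (b + (y + 2))%N); last by lia.
by have <- : (y + 2)%:R - b%:R - 2 = y%:R - b%:R :> R by rewrite natrD; ring.
Qed.

Theorem lemma2 (R : realFieldType) (N b c : nat) :
  (1 <= N)%N -> (b + c <= 2 * N)%N ->
  ( (c%:R < (b%:R - 8) / 7 :> R))
  \/ ((2 <= b)%N /\ (b%:R < (c%:R + 8) / 7 :> R))
  \/ ((b%:R < (c%:R - 8) / 7 :> R))
  \/ ((2 <= c)%N /\ (c%:R < (b%:R + 8) / 7 :> R)) ->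
  6 < LS R N b c.
Proof.
move=> _ hsum h; have b_ge0 := ler0n R b; have c_ge0 := ler0n R c.
have bc_ge := ler_norm (b%:R - c%:R - 2 : R).
have bc_geN := ler_norm (- (b%:R - c%:R - 2) : R); rewrite normrN in bc_geN.
have cb_ge := ler_norm (c%:R - b%:R - 2 : R).
have cb_geN := ler_norm (- (c%:R - b%:R - 2) : R); rewrite normrN in cb_geN.
case: h => [h|[[hb h]|[h|[hc h]]]].
- apply: LS_gt_transferl; rewrite ?natrD //; last by lra.
  by rewrite -(ler_nat R); lra.
- by apply: LS_gt_transferl; rewrite ?natrD //; lra.
- apply: LS_gt_transferr; rewrite ?natrD //; last by lra.
  by rewrite -(ler_nat R); lra.
- by apply: LS_gt_transferr; rewrite ?natrD //; lra.
Qed.
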